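(* Let $l\ge2$ and let $H=[h_1,\dots,h_l]\in\mathbb{R}^{5\times l}$ be a structured embedding matrix. For every $1\le k<l$ there is a two-layer ReLU feed-forward network $\mathrm{FFN}:\mathbb{R}^5\to\mathbb{R}^5$ (applied token-wise) with all parameters bounded in absolute value by $O(l\|H\|_\infty)$ such that $$\mathrm{FFN}(h_t)=h_t\ \text{ for } 1\le t\le k,\qquad \mathrm{FFN}(h_t)=(0,0,\mathcal{I}_t^1,\mathcal{I}_t^2,1)^\top\ \text{ for } k<t\le l.$$ Likewise, there is such a network with $\mathrm{FFN}(h_t)=h_t$ for $k\le t\le l$ and $\mathrm{FFN}(h_t)=(0,0,\mathcal{I}_t^1,\mathcal{I}_t^2,1)^\top$ for $t<k$.
   Context: A two-layer ReLU feed-forward network is a map $h\mapsto W_2\sigma(W_1h+b_1)+b_2$ with $\sigma(x)=\max(0,x)$ entrywise. A structured embedding matrix $H\in\mathbb{R}^{5\times l}$ is one whose $t$-th column $h_t$ has entries $(h_t^3,h_t^4)=\mathcal{I}_t=(\cos(\tfrac{t}{l}\tfrac{\pi}{2}),\sin(\tfrac{t}{l}\tfrac{\pi}{2}))$ and $h_t^5=1$; $h_t^1,h_t^2$ are arbitrary. $\|H\|_\infty$ is the maximal absolute entry. *)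

From HB Require Import structures.
From mathcomp Require Import all_boot all_order all_algebra.
From mathcomp Require Import all_classical all_reals all_analysis.
Set Implicit Arguments. Unset Strict Implicit. Unset Printing Implicit Defensive.
Import Order.TTheory GRing.Theory Num.Theory.
Local Open Scope ring_scope.

(* Rows 0..4 of a 5-vector correspond to entries h^1..h^5 of the paper.
   Column j : 'I_l of H corresponds to token t = j+1 (t ranges over 1..l). *)

Definition relu {R : realType} (x : R) : R := Num.max 0 x.

Definition angle {R : realType} (l t : nat) : R := (t%:R / l%:R) * (pi / 2).
Definition I1 {R : realType} (l t : nat) : R := cos (angle l t).
Definition I2 {R : realType} (l t : nat) : R := sin (angle l t).

Definition structured {R : realType} (l : nat) (H : 'M[R]_(5, l)) : Prop :=
  forall j : 'I_l,
    H (inord 2) j = I1 l j.+1 /\ H (inord 3) j = I2 l j.+1 /\ H (inord 4) j = 1.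

Definition normInf {R : realType} (m n : nat) (A : 'M[R]_(m, n)) : R :=
  \big[Num.max/0]_(i < m) \big[Num.max/0]_(j < n) `|A i j|.

Definition ffn {R : realType} (m : nat) (W1 : 'M[R]_(m, 5)) (b1 : 'cV[R]_m)
  (W2 : 'M[R]_(5, m)) (b2 : 'cV[R]_5) (h : 'cV[R]_5) : 'cV[R]_5 :=
  W2 *m map_mx relu (W1 *m h + b1) + b2.

Definition params_bounded {R : realType} (m : nat) (B : R) (W1 : 'M[R]_(m, 5))
  (b1 : 'cV[R]_m) (W2 : 'M[R]_(5, m)) (b2 : 'cV[R]_5) : Prop :=
  (forall i j, `|W1 i j| <= B) /\ (forall i j, `|b1 i j| <= B) /\
  (forall i j, `|W2 i j| <= B) /\ (forall i j, `|b2 i j| <= B).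

Definition pos_only {R : realType} (l t : nat) : 'cV[R]_5 :=
  \col_(i < 5) nth 0 [:: 0; 0; I1 l t; I2 l t; 1] i.

From HB Require Import structures.
From mathcomp Require Import all_boot all_order all_algebra.
From mathcomp Require Import all_classical all_reals all_analysis.
From mathcomp Require Import ring lra.
Import Order.TTheory GRing.Theory Num.Theory.
Import numFieldNormedType.Exports.
Local Open Scope ring_scope.

(* Every coordinate passes through the hidden layer as [relu x - relu (- x)],
   and the first two also receive a common shift [g], linear in the positional
   coordinates: [(relu (x + g) - relu (- x + g)) / 2] is [x] when [g >= |x|] and
   [0] when [g <= - |x|].  Weights [K (- sin phi, cos phi)] on [(I^1, I^2)] give,
   by the angle-subtraction formula, [g = K sin ((t - c) pi / (2 l))] on token
   [t], which changes sign exactly at [t = c].  For [c = k +- 1/2] every token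
   has [|t - c| >= 1/2], hence [|sin| >= cos 1 / (2 l)], and
   [|K| = 2 l (normInf H) / cos 1] makes [|g| >= normInf H]. *)

Section Gate.
Variable R : realType.

Lemma relu_ge0 (x : R) : 0 <= x -> relu x = x.
Proof. by move=> x0; rewrite /relu maxEle x0. Qed.

Lemma relu_le0 (x : R) : x <= 0 -> relu x = 0.
Proof. by move=> x0; rewrite /relu; apply/max_idPl. Qed.

Lemma relu_sub_reluN (x : R) : relu x - relu (- x) = x.
Proof.
have [x0|x0] := lerP 0 x.
  by rewrite relu_ge0 // relu_le0 ?subr0 // oppr_le0.
by rewrite relu_le0 ?(ltW x0) // relu_ge0 ?sub0r ?opprK // oppr_ge0 ltW.
Qed.

Definition gate (g x : R) : R := (relu (x + g) - relu (- x + g)) / 2.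

Lemma gate_pass (g x : R) : `|x| <= g -> gate g x = x.
Proof.
rewrite ler_norml => /andP[xg gx].
by rewrite /gate !relu_ge0; [field | lra | lra].
Qed.

Lemma gate_block (g x : R) : g <= - `|x| -> gate g x = 0.
Proof.
rewrite lerNr ler_norml => /andP[gx xg].
by rewrite /gate !relu_le0 ?subrr ?mul0r //; lra.
Qed.

End Gate.
Arguments gate {R}.

Section Trigonometry.
Variable R : realType.
Local Open Scope classical_set_scope.

Lemma cos1_mul_le_sin (x : R) : 0 < x <= 1 -> cos 1 * x <= sin x.
Proof.
case/andP => x0 x1.
have sin' y : y \in `]0, x[%R -> is_derive y 1 (@sin R) (cos y).
  by move=> _; exact: is_derive_sin.
have sin_cont : {within `[0, x], continuous (@sin R)}.
  by apply: continuous_subspaceT => y; exact: continuous_sin.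
have [c] := MVT x0 sin' sin_cont.
rewrite in_itv /= => /andP[c0 cx]; rewrite sin0 !subr0 => ->.
rewrite ler_wpM2r ?(ltW x0) //.
have pi2 := @pi_ge2 R.
rewrite leNgt ltr_cos ?in_itv /=; first by rewrite -leNgt (le_trans (ltW cx)).
  by rewrite ler01 /=; lra.
by rewrite (ltW c0) /=; lra.
Qed.

Lemma sin_angle_ge (l : nat) (u : R) : (0 < l)%N -> 1/2 <= u <= l%:R ->
  cos 1 / (2 * l%:R) <= sin (u / l%:R * (pi / 2)).
Proof.
move=> l0 /andP[u_ge u_le].
have l_gt0 : 0 < l%:R :> R by rewrite ltr0n.
have l_ge1 : 1 <= l%:R :> R by rewrite ler1n.
have pi2_ge1 := @pihalf_ge1 R; have pi2_lt2 := @pihalf_lt2 R.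
pose e : R := 1/2 / l%:R * (pi / 2).
have e_gt0 : 0 < e by rewrite /e !mulr_gt0 ?invr_gt0 //; lra.
have e_le1 : e <= 1.
  have half_le : 1/2 / l%:R <= 1/2 :> R by rewrite ler_pdivrMr // ler_peMr //; lra.
  have half_ge0 : 0 <= 1/2 / l%:R :> R by rewrite divr_ge0 ?ler0n //; lra.
  by rewrite /e; nra.
have e_le : e <= u / l%:R * (pi / 2).
  by rewrite /e !ler_wpM2r ?invr_ge0 //; lra.
have le_pi2 : u / l%:R * (pi / 2) <= pi / 2.
  by rewrite ler_piMl ?ler_pdivrMr ?mul1r //; lra.
have sin_mono : sin e <= sin (u / l%:R * (pi / 2)).
  rewrite leNgt ltr_sin ?in_itv /= -?leNgt //; apply/andP; split; lra.
have sin_e : cos 1 * e <= sin e by apply: cos1_mul_le_sin; rewrite e_gt0 e_le1.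
apply: le_trans (le_trans _ sin_e) sin_mono.
have -> : cos 1 * e = cos 1 / (2 * l%:R) * (pi / 2) by rewrite /e; field; rewrite lt0r_neq0.
by rewrite ler_peMr // divr_ge0 ?ltW ?cos1_gt0 ?mulr_gt0.
Qed.

Lemma sin_sub_angle (K c : R) (l t : nat) :
  - (K * sin (c / l%:R * (pi / 2))) * I1 l t + K * cos (c / l%:R * (pi / 2)) * I2 l t
  = K * sin ((t%:R - c) / l%:R * (pi / 2)).
Proof. by rewrite /I1 /I2 /angle !mulrBl sinB; ring. Qed.

Lemma sin_angle_threshold (l : nat) (B u : R) : (0 < l)%N -> 0 <= B -> 1/2 <= u <= l%:R ->
  B <= 2 / cos 1 * l%:R * B * sin (u / l%:R * (pi / 2)).
Proof.
move=> l0 B0 u_range; have l_gt0 : 0 < l%:R :> R by rewrite ltr0n.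
have cos1_gt0 := @cos1_gt0 R.
have B_eq : 2 / cos 1 * l%:R * B * (cos 1 / (2 * l%:R)) = B.
  by field; rewrite !lt0r_neq0.
rewrite -[X in X <= _]B_eq ler_wpM2l ?sin_angle_ge //.
by rewrite !mulr_ge0 ?invr_ge0 ?(ltW cos1_gt0).
Qed.

End Trigonometry.

Section GatingNetwork.
Variable R : realType.

Definition gating_W1 (G2 G3 : R) : 'M[R]_(10, 5) := \matrix_(p, j) nth 0 (nth [::]
  [:: [:: 1; 0; G2; G3; 0]; [:: -1; 0; G2; G3; 0];
      [:: 0; 1; G2; G3; 0]; [:: 0; -1; G2; G3; 0];
      [:: 0; 0; 1; 0; 0]; [:: 0; 0; -1; 0; 0];
      [:: 0; 0; 0; 1; 0]; [:: 0; 0; 0; -1; 0];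
      [:: 0; 0; 0; 0; 1]; [:: 0; 0; 0; 0; -1]] p) j.

Definition gating_W2 : 'M[R]_(5, 10) := \matrix_(i, p) nth 0 (nth [::]
  [:: [:: 2^-1; - 2^-1; 0; 0; 0; 0; 0; 0; 0; 0];
      [:: 0; 0; 2^-1; - 2^-1; 0; 0; 0; 0; 0; 0];
      [:: 0; 0; 0; 0; 1; -1; 0; 0; 0; 0];
      [:: 0; 0; 0; 0; 0; 0; 1; -1; 0; 0];
      [:: 0; 0; 0; 0; 0; 0; 0; 0; 1; -1]] i) p.

Lemma col5_nth (v : 'cV[R]_5) :
  v = \col_i nth 0 [:: v (inord 0) 0; v (inord 1) 0; v (inord 2) 0; v (inord 3) 0; v (inord 4) 0] i.
Proof.
apply/matrixP => i k; rewrite ord1 !mxE.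
by case: i => [[|[|[|[|[|//]]]]] ?] /=; congr (v _ _); apply/val_inj; rewrite /= inordK.
Qed.

Lemma sum_ord_inord n (F : 'I_n.+1 -> R) :
  \sum_(i < n.+1) F i = \sum_(0 <= k < n.+1) F (inord k).
Proof. by rewrite big_mkord; apply: eq_bigr => i _; rewrite inord_val. Qed.

Lemma ffn_gating (G2 G3 : R) (x : 'cV[R]_5) :
  let g := G2 * x (inord 2) 0 + G3 * x (inord 3) 0 in
  ffn (gating_W1 G2 G3) 0 gating_W2 0 x
  = \col_i nth 0 [:: gate g (x (inord 0) 0); gate g (x (inord 1) 0);
                     x (inord 2) 0; x (inord 3) 0; x (inord 4) 0] i.
Proof.
move=> g; apply/matrixP => i c; rewrite ord1 /ffn !addr0 !mxE.
rewrite !sum_ord_inord !big_nat_recl // !big_geq // !mxE.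
rewrite !sum_ord_inord !big_nat_recl // !big_geq // !mxE !inordK //=.
case: i => [[|[|[|[|[|//]]]]] ?] /=;
  rewrite !(mul0r, mul1r, mulN1r, add0r, addr0) ?relu_sub_reluN //.
all: by rewrite /gate /g; ring.
Qed.

Lemma normInf_ge m n (A : 'M[R]_(m, n)) i j : `|A i j| <= normInf A.
Proof.
rewrite /normInf (bigD1 i) //= le_max; apply/orP; left.
by rewrite (bigD1 j) //= le_max lexx.
Qed.

Lemma norm_nth_nth_le (s : seq (seq R)) (B : R) p j : 0 <= B ->
  all (all (fun a => `|a| <= B)) s -> `|nth 0 (nth [::] s p) j| <= B.
Proof.
move=> B0 /allP s_le.
have [ps|ps] := ltnP p (size s); last by rewrite (nth_default _ ps) nth_nil normr0.
have /allP row_le := s_le _ (mem_nth [::] ps).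
have [js|js] := ltnP j (size (nth [::] s p)); last by rewrite nth_default ?normr0.
exact: row_le _ (mem_nth 0 js).
Qed.

Lemma gating_params_bounded (G2 G3 B : R) : 1 <= B -> `|G2| <= B -> `|G3| <= B ->
  params_bounded B (gating_W1 G2 G3) 0 gating_W2 0.
Proof.
move=> B1 G2B G3B; have half_le : `|2^-1 : R| <= B by rewrite ger0_norm; lra.
split; [|split; [|split]] => i j; rewrite !mxE ?normr0; try lra;
  apply: norm_nth_nth_le; rewrite /= ?normrN ?normr0 ?normr1 ?G2B ?G3B ?half_le ?B1;
  by [|lra].
Qed.

End GatingNetwork.
Arguments gating_W1 {R}.
Arguments gating_W2 {R}.
Arguments normInf_ge {R m n}.

Section StructuredColumns.
Context {R : realType} {l : nat} {H : 'M[R]_(5, l)}.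
Hypothesis H_structured : structured H.

Definition threshold_W1 (K c : R) : 'M[R]_(10, 5) :=
  gating_W1 (- (K * sin (c / l%:R * (pi / 2)))) (K * cos (c / l%:R * (pi / 2))).

Definition token_shift (K c : R) (t : nat) : R := K * sin ((t%:R - c) / l%:R * (pi / 2)).

Lemma normInf_ge1 : (0 < l)%N -> 1 <= normInf H.
Proof.
move=> l0; have := normInf_ge H (inord 4) (Ordinal l0).
by have [_ [_ ->]] := H_structured (Ordinal l0); rewrite normr1.
Qed.

Lemma threshold_scale_ge1 : (0 < l)%N -> 1 <= 2 / cos 1 * l%:R * normInf H.
Proof.
move=> l0; have C_ge1 : 1 <= 2 / cos 1 :> R.
  by rewrite ler_pdivlMr ?cos1_gt0 // mul1r; have := @cos_le1 R 1; lra.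
by rewrite mulr_ege1 ?normInf_ge1 // mulr_ege1 // ler1n.
Qed.

Lemma ffn_threshold_col (K c : R) (j : 'I_l) :
  let g := token_shift K c j.+1 in
  ffn (threshold_W1 K c) 0 gating_W2 0 (col j H)
  = \col_i nth 0 [:: gate g (H (inord 0) j); gate g (H (inord 1) j);
                     I1 l j.+1; I2 l j.+1; 1] i.
Proof.
have [h2 [h3 h4]] := H_structured j.
by rewrite /threshold_W1 ffn_gating !mxE h2 h3 h4 sin_sub_angle.
Qed.

Lemma ffn_threshold_pass (K c : R) (j : 'I_l) : normInf H <= token_shift K c j.+1 ->
  ffn (threshold_W1 K c) 0 gating_W2 0 (col j H) = col j H.
Proof.
move=> H_le; have [h2 [h3 h4]] := H_structured j.
rewrite ffn_threshold_col [RHS]col5_nth !mxE h2 h3 h4.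
by rewrite !gate_pass // (le_trans (normInf_ge H _ _)).
Qed.

Lemma ffn_threshold_block (K c : R) (j : 'I_l) : token_shift K c j.+1 <= - normInf H ->
  ffn (threshold_W1 K c) 0 gating_W2 0 (col j H) = pos_only l j.+1.
Proof.
move=> le_H; rewrite ffn_threshold_col /pos_only !gate_block //;
  by rewrite (le_trans le_H) // lerN2 normInf_ge.
Qed.

Lemma threshold_ffn_exists (K c : R) (P Q : 'I_l -> Prop) : 1 <= `|K| ->
  (forall j, P j -> normInf H <= token_shift K c j.+1) ->
  (forall j, Q j -> token_shift K c j.+1 <= - normInf H) ->
  exists (m : nat) (W1 : 'M[R]_(m, 5)) (b1 : 'cV[R]_m) (W2 : 'M[R]_(5, m)) (b2 : 'cV[R]_5),
    params_bounded `|K| W1 b1 W2 b2 /\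
    forall j : 'I_l, (P j -> ffn W1 b1 W2 b2 (col j H) = col j H) /\
                     (Q j -> ffn W1 b1 W2 b2 (col j H) = pos_only l j.+1).
Proof.
move=> K_ge1 pass block; exists 10%N, (threshold_W1 K c), 0, gating_W2, 0; split.
  by apply: gating_params_bounded; rewrite // ?normrN normrM ler_piMr ?sin_max ?cos_max.
by move=> j; split => [/pass | /block]; [apply: ffn_threshold_pass | apply: ffn_threshold_block].
Qed.

End StructuredColumns.

Theorem lemma4 (R : realType) :
  exists C : R, 0 < C /\
  forall (l : nat) (H : 'M[R]_(5, l)), (2 <= l)%N -> structured H ->
  forall k : nat, (1 <= k)%N -> (k < l)%N ->
    (exists (m : nat) (W1 : 'M[R]_(m, 5)) (b1 : 'cV[R]_m)
            (W2 : 'M[R]_(5, m)) (b2 : 'cV[R]_5),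
       params_bounded (C * l%:R * normInf H) W1 b1 W2 b2 /\
       forall j : 'I_l,
         ((j.+1 <= k)%N -> ffn W1 b1 W2 b2 (col j H) = col j H) /\
         ((k < j.+1)%N -> ffn W1 b1 W2 b2 (col j H) = pos_only l j.+1)) /\
    (exists (m : nat) (W1 : 'M[R]_(m, 5)) (b1 : 'cV[R]_m)
            (W2 : 'M[R]_(5, m)) (b2 : 'cV[R]_5),
       params_bounded (C * l%:R * normInf H) W1 b1 W2 b2 /\
       forall j : 'I_l,
         ((k <= j.+1)%N -> ffn W1 b1 W2 b2 (col j H) = col j H) /\
         ((j.+1 < k)%N -> ffn W1 b1 W2 b2 (col j H) = pos_only l j.+1)).
Proof.
exists (2 / cos 1); split; first by rewrite divr_gt0 ?cos1_gt0.
move=> l H l2 Hs k k1 kl; have l0 : (0 < l)%N by apply: ltnW.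
have B_ge1 := normInf_ge1 Hs l0; have K_ge1 := threshold_scale_ge1 Hs l0.
set K := 2 / cos 1 * l%:R * normInf H in K_ge1 *.
have normK : `|K| = K by rewrite ger0_norm //; lra.
have threshold u : 1/2 <= u <= l%:R -> normInf H <= K * sin (u / l%:R * (pi / 2)).
  by move=> u_range; apply: sin_angle_threshold => //; lra.
have nat_le a b : (a <= b)%N -> a%:R <= b%:R :> R by rewrite ler_nat.
have nat_lt a b : (a < b)%N -> a%:R + 1 <= b%:R :> R by rewrite natr1 ler_nat.
have k_ge1 : 1 <= k%:R :> R by rewrite ler1n.
have k_lt := nat_lt _ _ kl.
have t_ge1 (j : 'I_l) : 1 <= j.+1%:R :> R by rewrite ler1n.
have t_le (j : 'I_l) : j.+1%:R <= l%:R :> R by rewrite ler_nat.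
split.
- rewrite -normK -normrN.
  apply: (threshold_ffn_exists Hs (- K) (k%:R + 1/2)) => [|j /nat_le jk|j /nat_lt kj];
    rewrite ?normrN ?normK // /token_shift.
  + rewrite mulNr -mulrN -sinN -!mulNr.
    by apply: threshold; have := t_ge1 j; lra.
  + by rewrite mulNr lerN2; apply: threshold; have := t_le j; lra.
- rewrite -normK.
  apply: (threshold_ffn_exists Hs K (k%:R - 1/2)) => [|j /nat_le kj|j /nat_lt jk];
    rewrite ?normK // /token_shift.
  + by apply: threshold; have := t_le j; lra.
  + rewrite -lerN2 opprK -mulrN -sinN -!mulNr.
    by apply: threshold; have := t_ge1 j; lra.
Qed.
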